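(* Let $n\ge 3$, $m=3\binom{n}{2}+2\binom{n}{3}$ and $\mathbb{P}_n=\mathbb{Z}^{2n}\oplus\mathbb{F}_2^{m}$, whose elements are written $\overline{\alpha}=\big((\alpha_l)_{1\le l\le 2n};(\alpha^1_{ij})_{i<j};(\alpha^2_{ij})_{i<j};(\alpha^3_{ij})_{i<j};(\alpha^1_{ijk})_{i<j<k};(\alpha^2_{ijk})_{i<j<k}\big)$ with indices in $\{1,\dots,n\}$, $\alpha_l\in\mathbb{Z}$ and all other coordinates in $\mathbb{F}_2$. Define $\overline{\alpha}\cdot\overline{\beta}=\overline{\alpha}+\overline{\beta}+\overline{\tau}$, where $\overline{\tau}$ has its first $2n$ coordinates equal to $0$ and its other coordinates given modulo $2$ (integers reduced mod 2) by: for $i<j$, $\tau^1_{ij}=\alpha_j\beta_i$, $\tau^2_{ij}=\alpha_{j+n}\beta_{i+n}$, $\tau^3_{ij}=\alpha_{i+n}\beta_j+\alpha_{j+n}\beta_i$; for $i<j<k$, $\tau^1_{ijk}=\alpha^3_{ij}\beta_k+\alpha^3_{ik}\beta_j+\alpha^3_{jk}\beta_i+\alpha_{i+n}\beta_j\beta_k+\alpha_{j+n}\beta_i\beta_k+\alpha_{k+n}\beta_i\beta_j$, $\tau^2_{ijk}=\alpha^3_{ij}\beta_{k+n}+\alpha^3_{ik}\beta_{j+n}+\alpha^3_{jk}\beta_{i+n}+\alpha_{i+n}\alpha_{j+n}\beta_k+\alpha_{i+n}\alpha_{k+n}\beta_j+\alpha_{j+n}\alpha_{k+n}\beta_i+\alpha_{i+n}(\beta_j\beta_{k+n}+\beta_{j+n}\beta_k)+\alpha_{j+n}(\beta_i\beta_{k+n}+\beta_{i+n}\beta_k)+\alpha_{k+n}(\beta_i\beta_{j+n}+\beta_{i+n}\beta_j)$.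 Then $\mathbb{P}_n$ with this product is a group. *)

From HB Require Import structures.
From mathcomp Require Import all_boot all_order all_algebra.
Set Implicit Arguments. Unset Strict Implicit. Unset Printing Implicit Defensive.
Import Order.TTheory GRing.Theory Num.Theory.

(* Index types: pairs i<j and triples i<j<k of elements of 'I_n
   (0-indexed: paper index l corresponds to ordinal l-1). *)
Notation pairT n := {p : 'I_n * 'I_n | p.1 < p.2}.
Notation tripT n := {t : 'I_n * 'I_n * 'I_n | (t.1.1 < t.1.2) && (t.1.2 < t.2)}.

(* An element of P_n = Z^{2n} (+) F_2^m.  The Z^{2n} part is split as
   px i = alpha_i (1 <= i <= n) and py i = alpha_{i+n}.  F_2 is modelled by
   bool with addition (+) (xor) and multiplication &&. *)
Record Pn (n : nat) := mkPn {
  px : {ffun 'I_n -> int};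
  py : {ffun 'I_n -> int};
  p1 : {ffun pairT n -> bool};
  p2 : {ffun pairT n -> bool};
  p3 : {ffun pairT n -> bool};
  q1 : {ffun tripT n -> bool};
  q2 : {ffun tripT n -> bool} }.

Definition par (z : int) : bool := odd (absz z).

Definition get2 n (f : {ffun pairT n -> bool}) (i j : 'I_n) : bool :=
  match (insub (i, j) : option (pairT n)) with Some p => f p | None => false end.

Definition pmul n (a b : Pn n) : Pn n :=
  let xa i := par (px a i) in let ya i := par (py a i) in
  let xb i := par (px b i) in let yb i := par (py b i) in
  let a3 := get2 (p3 a) in
  mkPn
    [ffun l => (px a l + px b l)%R]
    [ffun l => (py a l + py b l)%R]
    [ffun p : pairT n => let i := (val p).1 in let j := (val p).2 in
       p1 a p (+) p1 b p (+) (xa j && xb i)]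
    [ffun p : pairT n => let i := (val p).1 in let j := (val p).2 in
       p2 a p (+) p2 b p (+) (ya j && yb i)]
    [ffun p : pairT n => let i := (val p).1 in let j := (val p).2 in
       p3 a p (+) p3 b p (+) ((ya i && xb j) (+) (ya j && xb i))]
    [ffun t : tripT n => let i := (val t).1.1 in let j := (val t).1.2 in
       let k := (val t).2 in
       q1 a t (+) q1 b t (+)
       ((a3 i j && xb k) (+) (a3 i k && xb j) (+) (a3 j k && xb i)
        (+) [&& ya i, xb j & xb k] (+) [&& ya j, xb i & xb k]
        (+) [&& ya k, xb i & xb j])]
    [ffun t : tripT n => let i := (val t).1.1 in let j := (val t).1.2 in
       let k := (val t).2 in
       q2 a t (+) q2 b t (+)
       ((a3 i j && yb k) (+) (a3 i k && yb j) (+) (a3 j k && yb i)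
        (+) [&& ya i, ya j & xb k] (+) [&& ya i, ya k & xb j]
        (+) [&& ya j, ya k & xb i]
        (+) (ya i && ((xb j && yb k) (+) (yb j && xb k)))
        (+) (ya j && ((xb i && yb k) (+) (yb i && xb k)))
        (+) (ya k && ((xb i && yb j) (+) (yb i && xb j))))].

From mathcomp Require Import all_boot all_order all_algebra zify.
From Stdlib Require Import Btauto.
Set Implicit Arguments. Unset Strict Implicit.
Import GRing.Theory.

(* Write a product as a . b = a + b + tau(a, b).  The correction tau only
   depends on the parities of the Z-coordinates and on alpha^3, so
   associativity is the cocycle identity for tau, a polynomial identity over
   F_2 in the parity bits.  The identity element is 0.  Since tau(a, b)
   vanishes when b has zero Z-part, every z with zero Z-part is an
   involution; a . a' has zero Z-part when a' is a with its Z-coordinates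
   negated, so a' . (a . a') is a right inverse of a, and right inverses in a
   monoid are two-sided. *)

Section RightInverse.

Variables (T : Type) (mul : T -> T -> T) (one : T) (inv : T -> T).
Hypotheses (mulA : associative mul) (mulx1 : right_id one mul).
Hypothesis mulxV : forall x, mul x (inv x) = one.

Lemma mulVx x : mul (inv x) x = one.
Proof.
have -> : mul (inv x) x = mul (mul (inv x) x) (mul (inv x) (inv (inv x))).
  by rewrite mulxV mulx1.
by rewrite mulA -(mulA (inv x)) mulxV mulx1 mulxV.
Qed.

End RightInverse.

Lemma par_add (a b : int) : par (a + b)%R = par a (+) par b.
Proof. rewrite /par; lia. Qed.

Lemma par0 : par 0 = false.
Proof. by []. Qed.

Lemma get2E n (i j : 'I_n) (lt_ij : i < j) (f : {ffun pairT n -> bool}) :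
  get2 f i j = f (exist _ (i, j) lt_ij).
Proof.
rewrite /get2; case: insubP => [p _ hp |]; last by rewrite /= lt_ij.
by congr (f _); apply: val_inj.
Qed.

Lemma get2_false n (i j : 'I_n) : get2 [ffun _ : pairT n => false] i j = false.
Proof. by rewrite /get2; case: insub => // p; rewrite ffunE. Qed.

Lemma addb_xorb (a b : bool) : a (+) b = xorb a b.
Proof. by case: a; case: b. Qed.

(* [btauto] recognises the Stdlib [xorb] but not [addb]. *)
Ltac f2_ring := rewrite ?addb_xorb; btauto.

Lemma pmulA n : associative (@pmul n).
Proof.
move=> a b c; rewrite /pmul /=; congr mkPn; apply/ffunP.
1,2: by move=> l; rewrite !ffunE addrA.
1-3: by move=> p; rewrite !ffunE /= !par_add; f2_ring.
all: move=> [[[i j] k] /= ijk]; have /andP[lt_ij lt_jk] := ijk.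
all: have lt_ik := ltn_trans lt_ij lt_jk.
all: rewrite !ffunE /= !(get2E lt_ij) !(get2E lt_ik) !(get2E lt_jk) !ffunE /=.
all: rewrite !par_add; f2_ring.
Qed.

Definition pone n : Pn n :=
  mkPn [ffun _ => 0%R] [ffun _ => 0%R] [ffun _ => false] [ffun _ => false]
       [ffun _ => false] [ffun _ => false] [ffun _ => false].

Lemma pmul1p n : left_id (pone n) (@pmul n).
Proof.
case=> x y a1 a2 a3 b1 b2; rewrite /pmul /=; congr mkPn; apply/ffunP => t;
  rewrite !ffunE ?add0r //= ?get2_false ?par0 /=; f2_ring.
Qed.

Lemma pmulp1 n : right_id (pone n) (@pmul n).
Proof.
case=> x y a1 a2 a3 b1 b2; rewrite /pmul /=; congr mkPn; apply/ffunP => t;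
  rewrite !ffunE ?addr0 //= ?par0 /=; f2_ring.
Qed.

Lemma pmul_self_pone n (z : Pn n) :
  px z = [ffun _ => 0%R] -> py z = [ffun _ => 0%R] -> pmul z z = pone n.
Proof.
case: z => x y a1 a2 a3 b1 b2 /= -> ->; rewrite /pmul /pone /=.
by congr mkPn; apply/ffunP => t; rewrite !ffunE ?addr0 //= ?par0 /=; f2_ring.
Qed.

Definition pneg n (a : Pn n) : Pn n :=
  mkPn [ffun l => (- px a l)%R] [ffun l => (- py a l)%R]
       (p1 a) (p2 a) (p3 a) (q1 a) (q2 a).

Definition pinv n (a : Pn n) : Pn n := pmul (pneg a) (pmul a (pneg a)).

Lemma pmulpV n (a : Pn n) : pmul a (pinv a) = pone n.
Proof.
by rewrite /pinv pmulA pmul_self_pone //; apply/ffunP => l; rewrite !ffunE subrr.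
Qed.

Theorem proposition2p5 (n : nat) (hn : (3 <= n)%N) :
  (forall a b c : Pn n, pmul a (pmul b c) = pmul (pmul a b) c) /\
  exists e : Pn n,
    (forall a : Pn n, pmul e a = a /\ pmul a e = a) /\
    (forall a : Pn n, exists b : Pn n, pmul a b = e /\ pmul b a = e).
Proof.
split; first exact: pmulA.
exists (pone n); split; first by move=> a; rewrite pmul1p pmulp1.
move=> a; exists (pinv a); split; first exact: pmulpV.
exact: (mulVx (@pmulA n) (@pmulp1 n) (@pmulpV n)).
Qed.
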